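(* For any pure $n$-qubit state $\psi$ and any $0<\tau\le1$, $F_\psi(\tau)\le 2^{M_0(\psi)}\tau$.
   Context: Pauli strings $P_x$, $x\in\{0,1\}^{2n}$, are the $n$-qubit Hermitian Pauli strings; $\alpha_\psi(x)=\mathrm{tr}(\psi P_x)$; the Pauli distribution is $p_\psi(x)=\alpha_\psi(x)^2/2^n$. The CDF is $F_\psi(\tau)=\sum_{x:\,\alpha_\psi(x)^2<\tau}p_\psi(x)$. $M_0(\psi)=\log_2|\{x:\alpha_\psi(x)\neq0\}|-n$. *)

From mathcomp Require Import all_boot all_order all_algebra.
From mathcomp Require Import reals exp complex mxtens.
Set Implicit Arguments. Unset Strict Implicit. Unset Printing Implicit Defensive.
Import Order.TTheory GRing.Theory Num.Theory.
Local Open Scope ring_scope.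
Local Open Scope complex_scope.

Section Pauli.
Variable R : realType.
Local Notation C := (R[i]).

(* Single-qubit Hermitian Pauli matrix labelled by (a,b) in {0,1}^2:
   (0,0) = I, (1,0) = X, (0,1) = Z, (1,1) = Y = i X Z. *)
Definition pauli1 (ab : bool * bool) : 'M[C]_2 :=
  \matrix_(r < 2, c < 2)
    match ab with
    | (false, false) => if r == c then 1 else 0
    | (true, false)  => if r != c then 1 else 0
    | (false, true)  => if r == c then (if r == 0 :> nat then 1 else -1) else 0
    | (true, true)   => if r == c then 0
                        else if r == 0 :> nat then - 'i else 'i
    end.

Fixpoint pauli_seq (s : seq (bool * bool)) : 'M[C]_(2 ^ size s) :=
  match s with
  | [::] => 1%:M
  | ab :: s' => castmx (esym (expnS 2 (size s')), esym (expnS 2 (size s')))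
                       (pauli1 ab *t pauli_seq s')
  end.

(* The n-qubit Pauli string P_x, x in {0,1}^{2n} encoded as n pairs of bits. *)
Definition pauli (n : nat) (x : n.-tuple (bool * bool)) : 'M[C]_(2 ^ n) :=
  castmx (congr1 (expn 2) (size_tuple x), congr1 (expn 2) (size_tuple x))
         (pauli_seq x).

Definition adjmx (m k : nat) (M : 'M[C]_(m, k)) : 'M[C]_(k, m) :=
  (map_mx Num.conj M)^T.

Definition unit_vec (n : nat) (v : 'cV[C]_(2 ^ n)) : Prop := adjmx v *m v = 1.
Definition pure_state (n : nat) (v : 'cV[C]_(2 ^ n)) : 'M[C]_(2 ^ n) := v *m adjmx v.

Definition alpha (n : nat) (psi : 'M[C]_(2 ^ n)) (x : n.-tuple (bool * bool)) : C :=
  \tr (psi *m pauli x).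

Definition pauli_dist (n : nat) (psi : 'M[C]_(2 ^ n)) (x : n.-tuple (bool * bool)) : C :=
  alpha psi x ^+ 2 / (2 ^ n)%:R.

Definition pauli_cdf (n : nat) (psi : 'M[C]_(2 ^ n)) (tau : R) : C :=
  \sum_(x : n.-tuple (bool * bool) | alpha psi x ^+ 2 < tau%:C) pauli_dist psi x.

Definition log2 (y : R) : R := ln y / ln 2.

Definition M0 (n : nat) (psi : 'M[C]_(2 ^ n)) : R :=
  log2 (#|[set x : n.-tuple (bool * bool) | alpha psi x != 0]|%:R) - n%:R.

End Pauli.

(* Every Pauli weight with alpha_psi(x)^2 < tau is at most tau / 2^n, and only the
   2^(M_0 + n) strings in the support of alpha_psi contribute to F_psi(tau). *)
From mathcomp Require Import all_boot all_order all_algebra.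
From mathcomp Require Import reals exp complex mxtens.
Import Order.TTheory GRing.Theory Num.Theory.
Local Open Scope ring_scope.
Local Open Scope complex_scope.

Set Implicit Arguments.
Unset Strict Implicit.
Unset Printing Implicit Defensive.

Lemma sum_lt_le_card_support (T : finType) (K : numDomainType) (f : T -> K) (t : K) :
  0 <= t -> \sum_(x | f x < t) f x <= #|[set x | f x != 0]|%:R * t.
Proof.
move=> t_ge0; rewrite mulr_natl -sumr_const big_mkcond [leRHS]big_mkcond /=.
apply: ler_sum => x _; rewrite inE.
by have [-> | _] := eqVneq (f x) 0; case: ifP => // /ltW.
Qed.

Section PauliBounds.
Variable R : realType.

Lemma powR2_log2 (y : R) : 0 < y -> 2 `^ log2 y = y.
Proof.
move=> y_gt0; rewrite /powR pnatr_eq0 /log2 mulfVK ?lnK ?posrE //.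
by rewrite gt_eqF // ln_gt0 // ltr1n.
Qed.

Lemma powR2_log2_subn (y : R) (n : nat) :
  0 < y -> 2 `^ (log2 y - n%:R) = y / 2 ^+ n.
Proof.
move=> y_gt0; rewrite powRB; last by apply/implyP; rewrite pnatr_eq0.
by rewrite powR_mulrn // powR2_log2.
Qed.

Lemma pauli_cdf_le_card_support (n : nat) (psi : 'M[R[i]]_(2 ^ n)) (tau : R) :
  0 <= tau ->
  pauli_cdf psi tau <=
    #|[set x | alpha psi x != 0]|%:R * tau%:C / (2 ^ n)%:R.
Proof.
move=> tau_ge0; rewrite /pauli_cdf /pauli_dist -mulr_suml.
rewrite ler_wpM2r ?invr_ge0 ?ler0n //.
have -> : [set x | alpha psi x != 0] = [set x | alpha psi x ^+ 2 != 0].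
  by apply/setP => x; rewrite !inE sqrf_eq0.
by apply: sum_lt_le_card_support; rewrite lecR.
Qed.

End PauliBounds.

Theorem lemma2 (R : realType) (n : nat) (v : 'cV[R[i]]_(2 ^ n)) (tau : R) :
  unit_vec v -> 0 < tau -> tau <= 1 ->
  pauli_cdf (pure_state v) tau <= ((2 `^ M0 (pure_state v)) * tau)%:C.
Proof.
move=> _ tau_gt0 _; have tau_ge0 := ltW tau_gt0.
apply: (le_trans (pauli_cdf_le_card_support (pure_state v) tau_ge0)).
set N := #|_|.
have [-> | N_gt0] := posnP N.
  by rewrite !mul0r lecR mulr_ge0 ?powR_ge0.
rewrite /M0 -/N powR2_log2_subn ?ltr0n // mulrAC !rmorphM /=.
rewrite rmorphV ?unitfE ?expf_neq0 ?pnatr_eq0 //= rmorphXn !rmorph_nat natrX.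
by rewrite lexx.
Qed.
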